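(* Let $M$ be a graded generalized Eulerian $A_1(K)$-module. Then $H_0(X_1;M)=M/X_1M$ and $H_1(X_1;M)=\ker(X_1\colon M(-1)\to M)$ are graded $K$-vector spaces concentrated in degree $0$.
   Context: $K$ is a field of characteristic zero; $A_1(K)=K\langle X_1,\partial_1\rangle$ with $\partial_1X_1-X_1\partial_1=1$, graded by $\deg X_1=1$, $\deg\partial_1=-1$. A graded $A_1(K)$-module $M$ is generalized Eulerian if for every homogeneous $z\in M$ of degree $|z|$ there is $a\ge1$ with $(X_1\partial_1-|z|)^az=0$. $M(l)_j=M_{j+l}$. *)

From HB Require Import structures.
From mathcomp Require Import all_boot all_order all_algebra.
Set Implicit Arguments. Unset Strict Implicit. Unset Printing Implicit Defensive.
Import Order.TTheory GRing.Theory Num.Theory.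
Local Open Scope ring_scope.

Definition is_Z_grading (K : fieldType) (M : lmodType K) (G : int -> {pred M}) : Prop :=
  [/\ (forall j, 0 \in G j),
      (forall j (a : K) (x y : M), x \in G j -> y \in G j -> a *: x + y \in G j),
      (forall m : M, exists (s : seq int) (f : int -> M),
          [/\ uniq s, (forall j, f j \in G j) & m = \sum_(j <- s) f j])
    & (forall (s : seq int) (f : int -> M), uniq s -> (forall j, f j \in G j) ->
          \sum_(j <- s) f j = 0 -> forall j, j \in s -> f j = 0)].

(* A graded A_1(K)-module structure on M: X = action of X_1, D = action of
   partial_1, K-linear, with D X - X D = 1, deg X_1 = 1, deg partial_1 = -1. *)
Definition is_graded_A1_module (K : fieldType) (M : lmodType K)
    (G : int -> {pred M}) (X D : {linear M -> M}) : Prop :=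
  [/\ is_Z_grading G,
      (forall m : M, D (X m) - X (D m) = m),
      (forall j (m : M), m \in G j -> X m \in G (j + 1)%R)
    & (forall j (m : M), m \in G j -> D m \in G (j - 1)%R)].

Definition gen_Eulerian (K : fieldType) (M : lmodType K)
    (G : int -> {pred M}) (X D : {linear M -> M}) : Prop :=
  forall (j : int) (z : M), z \in G j ->
    exists a : nat, (0 < a)%N /\
      iter a (fun w => X (D w) - (j%:~R : K) *: w) z = 0.

From HB Require Import structures.
From mathcomp Require Import all_boot all_order all_algebra.
Import Order.TTheory GRing.Theory Num.Theory.
Set Implicit Arguments. Unset Strict Implicit. Unset Printing Implicit Defensive.
Local Open Scope ring_scope.

(* On M_j the Euler operator E = X_1 d_1 is j plus a nilpotent operator, hence
   invertible when j <> 0 in characteristic zero; every z in M_j is then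
   X_1 (d_1 w) for some w in M_j, so H_0 vanishes in degree j.  If z in M_(j-1)
   is killed by X_1, the commutation relation gives E z = -z, so E - (j-1)
   acts on z as the nonzero scalar -j and the Eulerian condition forces z = 0. *)

Lemma pchar0_intr_eq0 (K : fieldType) (j : int) :
  [pchar K] =i pred0 -> (j%:~R == 0 :> K) = (j == 0).
Proof.
move=> /(pcharf0P K) natf_eq0.
case: j => n; first by rewrite -pmulrn natf_eq0.
by rewrite NegzE mulrNz oppr_eq0 -pmulrn natf_eq0.
Qed.

Section ShiftedNilpotentOperator.

Variables (K : fieldType) (M : lmodType K) (E : {linear M -> M}) (c : K).

Lemma iter_shift_eigen (b : K) (z : M) (a : nat) :
  E z = b *: z -> iter a (fun w => E w - c *: w) z = (b - c) ^+ a *: z.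
Proof.
move=> Ez; elim: a => [|a IH] /=; first by rewrite scale1r.
by rewrite IH linearZ /= Ez !scalerA -scalerBl exprSr mulrBr [c * _]mulrC.
Qed.

Variable S : {pred M}.
Hypotheses (S_submod : GRing.submod_closed S) (ES : {in S, forall z, E z \in S}).
HB.instance Definition _ := GRing.isSubmodClosed.Build K M S S_submod.

Lemma iter_shift_eq0_image (a : nat) (z : M) :
  c != 0 -> z \in S -> iter a (fun w => E w - c *: w) z = 0 ->
  exists2 w, w \in S & E w = z.
Proof.
move=> c_neq0; elim: a z => [|a IH] z zS.
  by move=> /= ->; exists 0; rewrite ?rpred0 ?linear0.
rewrite iterSr => /IH[]; first by rewrite rpredB ?rpredZ ?ES.
move=> w wS Ew; exists (c^-1 *: (z - w)); first by rewrite rpredZ ?rpredB.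
by rewrite linearZ linearB /= Ew opprB addrC subrK scalerA mulVf ?scale1r.
Qed.

End ShiftedNilpotentOperator.

Theorem mainTheorem10 (K : fieldType) (M : lmodType K)
    (G : int -> {pred M}) (X D : {linear M -> M}) :
  [pchar K] =i pred0 ->
  is_graded_A1_module G X D ->
  gen_Eulerian G X D ->
  (forall (j : int) (z : M), j != 0 -> z \in G j ->
     exists2 y : M, y \in G (j - 1) & X y = z) /\
  (forall (j : int) (z : M), j != 0 -> z \in G (j - 1) -> X z = 0 -> z = 0).
Proof.
move=> char0 [[G0 Glin _ _] DX XG DG] eulerian.
have intr_neq0 (j : int) : j != 0 -> (j%:~R : K) != 0 by rewrite pchar0_intr_eq0.
have submod_G j : GRing.submod_closed (G j) := conj (G0 j) (Glin j).
split=> [j z j_neq0 zG | j z j_neq0 zG Xz].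
  have XDG : {in G j, forall w, (X \o D) w \in G j}.
    by move=> w /DG /XG; rewrite subrK.
  have [a [_ nil_z]] := eulerian j z zG.
  have [w wG <-] := iter_shift_eq0_image (submod_G j) XDG
                      (intr_neq0 j j_neq0) zG nil_z.
  by exists (D w); first exact: DG.
have XDz : (X \o D) z = -1 *: z.
  by have := DX z; rewrite Xz linear0 sub0r scaleN1r => /(canRL opprK).
have [a [a_gt0 nil_z]] := eulerian _ z zG.
move: nil_z; rewrite (iter_shift_eigen _ a XDz) => /eqP.
have -> : -1 - (j - 1)%:~R = - j%:~R :> K by rewrite mulrzBr mulr1z opprB addKr.
rewrite scaler_eq0 expf_eq0 a_gt0 oppr_eq0.
by rewrite (negPf (intr_neq0 j j_neq0)) => /eqP.
Qed.
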